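(* Let $K'/K$ be a finite Galois extension inside $\bar K$. Suppose $M/K$ is obtained by nontrivial strong cluster magnification from a subextension $L/K$ with magnification factor $d$, and suppose $\tilde M$ and $K'$ are linearly disjoint over $K$. Then $MK'/K'$ is obtained by nontrivial strong cluster magnification from $LK'/K'$ with the same magnification factor $d$. Furthermore, $MK'/K$ is obtained by strong cluster magnification from $M/K$ and $LK'/K$ is obtained by strong cluster magnification from $L/K$, and these magnifications are nontrivial if $[K':K]>1$.
   Context: $K$ is a perfect field with a fixed algebraic closure $\bar K$; all extensions are finite and contained in $\bar K$; $\tilde L$ denotes the Galois closure of $L$ over the relevant base field in $\bar K$. Definition: for a base field $E$, $M/E$ is obtained by strong cluster magnification from a subextension $L/E$ ($E\subseteq L\subseteq M$) if $[L:E]>2$, and there is a finite Galois extension $F/E$ with the Galois closure of $L/E$ and $F$ linearly disjoint over $E$ and $LF=M$. $[F:E]$ is the magnification factor; the magnification is nontrivial if $F\ne E$. *)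

From HB Require Import structures.
From mathcomp Require Import all_boot all_order all_algebra all_fingroup all_solvable all_field.
Set Implicit Arguments. Unset Strict Implicit. Unset Printing Implicit Defensive.
Import GRing.Theory.
Local Open Scope ring_scope.

Definition perfect_field (F : fieldType) : Prop :=
  [pchar F] =i pred0 \/ exists2 p : nat, p \in [pchar F] & forall x : F, exists y : F, y ^+ p = x.

Section Magnification.
Variables (F0 : fieldType) (Om : splittingFieldType F0).

Definition gal_closure (E L : {subfield Om}) : {vspace Om} :=
  (\big[@prodv _ Om/1%VS]_(s in 'Gal({:Om} / E)%g) (s @: L))%VS.

Definition lin_disjoint (E : {subfield Om}) (A B : {vspace Om}) : bool :=
  \dim_E (A * B)%VS == (\dim_E A * \dim_E B)%N.

(* M/E is obtained by strong cluster magnification from L/E, witnessed by the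
   finite Galois extension Fw/E. *)
Definition scm_with (E L M Fw : {subfield Om}) : bool :=
  [&& (E <= L)%VS, (L <= M)%VS, (2 < \dim_E L)%N, galois E Fw,
      lin_disjoint E (gal_closure E L) Fw & ((L * Fw)%VS == M)].

Definition scm (E L M : {subfield Om}) : Prop :=
  exists Fw : {subfield Om}, scm_with E L M Fw.

Definition scm_factor (E L M : {subfield Om}) (d : nat) : Prop :=
  exists Fw : {subfield Om}, scm_with E L M Fw /\ \dim_E Fw = d.

Definition scm_nontrivial (E L M : {subfield Om}) : Prop :=
  exists Fw : {subfield Om}, scm_with E L M Fw /\ Fw != E.

Definition scm_nontrivial_factor (E L M : {subfield Om}) (d : nat) : Prop :=
  exists Fw : {subfield Om}, [/\ scm_with E L M Fw, Fw != E & \dim_E Fw = d].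
End Magnification.

From HB Require Import structures.
From mathcomp Require Import all_boot all_order all_algebra all_fingroup all_solvable all_field.
Set Implicit Arguments. Unset Strict Implicit. Unset Printing Implicit Defensive.
Local Open Scope ring_scope.

(* Write G_L, G_M for the Galois closures of L, M over K and F for the
   magnifying field.  Over a common subfield E, linear disjointness of A and B
   is the identity dim(AB) dim E = dim A dim B, and it passes from A to any
   intermediate field A' because dim(AB) <= [A:A'] dim(A'B).  As G_L F lies in
   G_M, which is disjoint from K', the fields G_L, F, K' are jointly disjoint
   over K, so G_L K' and F K' are disjoint over K' and [FK':K'] = [F:K].  The
   Galois closure of LK' over K' lies in G_L K', which gives the magnification
   of LK'/K' by FK'; the other assertions magnify by K' itself. *)

Section LinearDisjointness.
Variables (F0 : fieldType) (Om : splittingFieldType F0).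
Implicit Types (E A B C F : {subfield Om}) (U V : {vspace Om}).

Lemma dim_prodv_field_module F U V :
  (F * U <= U)%VS -> (F * V <= V)%VS -> (\dim (U * V) <= \dim_F U * \dim V)%N.
Proof.
move=> modU modV; have [xs _ [defU _]] := field_module_semisimple modU.
have -> : (U * V)%VS = (\sum_(i < \dim_F U) F * <[xs`_i]> * V)%VS.
  by rewrite -{1}defU (big_morph (fun W => W * V)%VS (fun W1 W2 => prodvDl W1 W2 V) (prod0v V)).
apply: leq_trans (dimv_leq_sum _ _ _) _.
rewrite -[X in (_ <= X * _)%N](card_ord (\dim_F U)) -sum_nat_const.
apply: leq_sum => i _; rewrite -prodvA prodvCA.
apply: leq_trans (dimvS (prodvSr _ modV)) _.
apply: leq_trans (dim_prodv _ _) _.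
by rewrite dim_vline; case: (xs`_i != 0); rewrite ?mul1n ?mul0n.
Qed.

Lemma dim_prodv_sup_field E A B : (E <= A)%VS -> (E <= B)%VS ->
  (\dim (A * B) * \dim E <= \dim A * \dim B)%N.
Proof.
move=> sEA sEB; rewrite (dim_sup_field sEA) mulnAC leq_pmul2r ?adim_gt0 //.
by apply: dim_prodv_field_module; rewrite sup_field_module.
Qed.

Lemma lin_disjointE E A B : (E <= A)%VS -> (E <= B)%VS ->
  lin_disjoint E A B = (\dim (A * B) * \dim E == \dim A * \dim B)%N.
Proof.
move=> sEA sEB; have sEAB : (E <= A * B)%VS := subv_trans sEA (field_subvMr A B).
rewrite /lin_disjoint [in RHS](dim_sup_field sEAB) [in RHS](dim_sup_field sEA).
by rewrite [in RHS](dim_sup_field sEB) mulnACA -mulnA eqn_pmul2r // muln_gt0 !adim_gt0.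
Qed.

Lemma lin_disjointSl E A' A B : (E <= A')%VS -> (A' <= A)%VS -> (E <= B)%VS ->
  lin_disjoint E A B -> lin_disjoint E A' B.
Proof.
move=> sEA' sA'A sEB; have sEA := subv_trans sEA' sA'A.
rewrite !lin_disjointE // => /eqP disjAB.
have AA' : (A * A')%VS = A by rewrite prodvC field_module_eq ?sup_field_module.
have le_AB : (\dim (A * B) <= \dim_A' A * \dim (A' * B))%N.
  rewrite -{1}AA' -prodvA; apply: dim_prodv_field_module.
    by rewrite sup_field_module.
  by rewrite prodvA prodv_id.
have le_A'B := dim_prodv_sup_field sEA' sEB.
have gt0_AA' : (0 < \dim_A' A)%N by rewrite divn_gt0 ?adim_gt0 ?dimvS.
rewrite -(eqn_pmul2l gt0_AA') eqn_leq leq_pmul2l // le_A'B /=.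
rewrite mulnA -(dim_sup_field sA'A) -disjAB.
by rewrite mulnA leq_pmul2r ?adim_gt0.
Qed.

Lemma lin_disjoint_dim_prodv E A C : (E <= A)%VS -> (E <= C)%VS ->
  lin_disjoint E A C -> \dim_C (A * C)%VS = \dim_E A.
Proof.
move=> sEA sEC; rewrite lin_disjointE // => /eqP disjAC; apply/eqP.
rewrite -(eqn_pmul2r (adim_gt0 C)) -(dim_sup_field (field_subvMl A C)).
by rewrite -(eqn_pmul2r (adim_gt0 E)) disjAC mulnAC -(dim_sup_field sEA).
Qed.

Lemma prodv_distr_id U V C : ((U * C) * (V * C))%VS = ((U * V) * C)%VS.
Proof. by rewrite prodvA [(U * C * V)%VS]prodvAC -[(U * V * C * C)%VS]prodvA prodv_id. Qed.

Lemma lin_disjoint_base_change E A B C :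
    (E <= A)%VS -> (E <= B)%VS -> (E <= C)%VS ->
    lin_disjoint E A B -> lin_disjoint E (A * B)%AS C ->
  lin_disjoint C (A * C)%AS (B * C)%AS.
Proof.
move=> sEA sEB sEC disjAB disjABC.
have disjAC := lin_disjointSl sEA (field_subvMr A B) sEC disjABC.
have disjBC := lin_disjointSl sEB (field_subvMl A B) sEC disjABC.
have sEAB : (E <= A * B)%VS := subv_trans sEA (field_subvMr A B).
rewrite lin_disjointE ?field_subvMl //= prodv_distr_id.
move: disjAB disjABC disjAC disjBC; rewrite !lin_disjointE //.
move=> /eqP dAB /eqP dABC /eqP dAC /eqP dBC.
have e2_gt0 : (0 < \dim E * \dim E)%N by rewrite muln_gt0 adim_gt0.
rewrite -(eqn_pmul2r e2_gt0) mulnACA dABC [(\dim C * \dim E)%N]mulnC mulnACA dAB.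
by rewrite [in X in (_ == X)%N]mulnACA dAC dBC mulnACA.
Qed.

Lemma dimv_over_gt1 E F : (E <= F)%VS -> (1 < \dim_E F)%N = (F != E).
Proof.
move=> sEF; have gt0_EF : (0 < \dim_E F)%N by rewrite divn_gt0 ?adim_gt0 ?dimvS.
rewrite ltn_neqAle gt0_EF andbT -(eqn_pmul2r (adim_gt0 E)) mul1n.
by rewrite -dim_sup_field // (dimv_leqif_eq sEF).2 eq_sym.
Qed.
End LinearDisjointness.

Section GaloisClosure.
Variables (F0 : fieldType) (Om : splittingFieldType F0).
Implicit Types (E K L M F : {subfield Om}).

Lemma limg_fixed (f : 'End(Om)) (U : {vspace Om}) :
  {in U, forall a, f a = a} -> (f @: U)%VS = U.
Proof.
by move=> fixU; rewrite -[RHS]lim1g; apply: eq_in_limg => a /fixU ->; rewrite id_lfunE.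
Qed.

Lemma gal_closure_is_aspace E L : is_aspace (gal_closure E L).
Proof.
rewrite /gal_closure; elim/big_ind: _ => [|U V aU aV|s _].
- exact: (valP (1%AS : {subfield Om})).
- exact: (prodv_is_aspace (ASpace aU) (ASpace aV)).
- exact: (valP (s @: L)%AS).
Qed.

Definition gal_closure_field E L : {subfield Om} := ASpace (gal_closure_is_aspace E L).

Lemma limg_sub_gal_closure E L s :
  s \in 'Gal({:Om} / E)%g -> (s @: L <= gal_closure E L)%VS.
Proof.
move=> galEs; rewrite /gal_closure (bigD1 s) //= -{1}[(s @: L)%VS]prodv1 prodvSr //.
elim/big_ind: _ => [|U V sU1 sV1|t _] //; first by rewrite -(prodv1 1%VS) prodvS.
exact: (sub1v (t @: L)%AS).
Qed.

Lemma gal_closure_id E L : (L <= gal_closure E L)%VS.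
Proof.
have := limg_sub_gal_closure L (group1 'Gal({:Om} / E)%g).
by rewrite limg_fixed // => a _; rewrite gal_id.
Qed.

Lemma gal_closureS E L M : (L <= M)%VS -> (gal_closure E L <= gal_closure E M)%VS.
Proof.
move=> sLM; rewrite /gal_closure.
by elim/big_ind2: _ => [|U1 U2 V1 V2|s _]; [|apply: prodvS|apply: limgS].
Qed.

Lemma gal_closure_prodv E K L :
  (E <= K)%VS -> (gal_closure K (L * K)%AS <= gal_closure E L * K)%VS.
Proof.
move=> sEK; rewrite {1}/gal_closure; elim/big_ind: _ => [|U V|s galKs].
- exact: (sub1v (gal_closure_field E L * K)%AS).
- move=> sU sV; exact: (prodv_sub (A := (gal_closure_field E L * K)%AS) sU sV).
rewrite /= aimgM (limg_fixed (U := K)) => [|a]; last exact: fixed_gal (subvf K) galKs.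
by rewrite prodvSl // limg_sub_gal_closure // (subsetP (galS _ sEK)).
Qed.

Lemma galois_prodv E K F :
  (E <= K)%VS -> separable E {:Om} -> galois E F -> galois K (F * K).
Proof.
move=> sEK sepOm /and3P[_ _ /(normalFieldS sEK) normKF].
rewrite /galois field_subvMl (separableSl sEK (separableSr (subvf _) sepOm)) /=.
apply/forall_inP => f; rewrite inE kAutfE => /kAHomP fixK.
by rewrite aimgM (eqP (forall_inP normKF f _)) ?limg_fixed // inE kAutfE; apply/kAHomP.
Qed.
End GaloisClosure.

Section Magnification.
Variables (F0 : fieldType) (Om : splittingFieldType F0).
Implicit Types (E K L M F X : {subfield Om}).

Lemma scm_with_prodv E L M F :
    (E <= L)%VS -> (2 < \dim_E L)%N -> galois E F ->
    lin_disjoint E (gal_closure E L) F -> (L * F)%VS = M ->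
  scm_with E L M F.
Proof.
move=> sEL dimL galF disjLF defM.
by rewrite /scm_with sEL -defM field_subvMr dimL galF disjLF /=.
Qed.

Lemma scm_with_galois_disjoint E L M F X K :
    scm_with E L M F -> (L <= X <= M)%VS -> galois E K ->
    lin_disjoint E (gal_closure E M) K ->
  scm_with E X (X * K)%AS K.
Proof.
move=> /and3P[sEL _ /and4P[dimL _ _ _]] /andP[sLX sXM] galK disjMK.
have sEX := subv_trans sEL sLX.
have sEK : (E <= K)%VS by case/and3P: galK.
apply: scm_with_prodv galK _ erefl => //.
  exact: leq_trans dimL (leq_div2r _ (dimvS sLX)).
have sEGX : (E <= gal_closure_field E X)%VS := subv_trans sEX (gal_closure_id E X).
exact: (lin_disjointSl (A := gal_closure_field E M) sEGX (gal_closureS E sXM) sEK disjMK).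
Qed.

Lemma scm_with_base_change E K L M F :
    (E <= K)%VS -> separable E {:Om} -> scm_with E L M F ->
    lin_disjoint E (gal_closure E M) K ->
  scm_with K (L * K)%AS (M * K)%AS (F * K)%AS /\ \dim_K (F * K)%VS = \dim_E F.
Proof.
move=> sEK sepOm /and3P[sEL sLM /and4P[dimL galF disjLF /eqP defM]] disjMK.
pose GL := gal_closure_field E L; pose GM := gal_closure_field E M.
have sEF : (E <= F)%VS by case/and3P: galF.
have sFM : (F <= M)%VS by rewrite -defM field_subvMl.
have sMGM : (M <= GM)%VS := gal_closure_id E M.
have sEGL : (E <= GL)%VS := subv_trans sEL (gal_closure_id E L).
have disjGM X : (E <= X)%VS -> (X <= GM)%VS -> lin_disjoint E X K.
  by move=> sEX sXGM; apply: lin_disjointSl sEX sXGM sEK disjMK.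
have sGLGM : (GL <= GM)%VS := gal_closureS E sLM.
have sGLFGM : (GL * F <= GM)%VS := prodv_sub sGLGM (subv_trans sFM sMGM).
have sEGLF : (E <= GL * F)%VS := subv_trans sEGL (field_subvMr GL F).
have disjK : lin_disjoint K (GL * K)%AS (F * K)%AS.
  exact: lin_disjoint_base_change sEGL sEF sEK disjLF (disjGM (GL * F)%AS sEGLF sGLFGM).
split; last exact: lin_disjoint_dim_prodv sEF sEK (disjGM F sEF (subv_trans sFM sMGM)).
apply: scm_with_prodv.
- exact: field_subvMl.
- by rewrite (lin_disjoint_dim_prodv sEL sEK (disjGM L sEL (subv_trans sLM sMGM))).
- exact: galois_prodv sEK sepOm galF.
- have sKG : (K <= gal_closure_field K (L * K)%AS)%VS.
    exact: subv_trans (field_subvMl L K) (gal_closure_id _ _).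
  have sGGLK : (gal_closure K (L * K)%AS <= GL * K)%VS := gal_closure_prodv L sEK.
  exact: (lin_disjointSl (A := (GL * K)%AS) sKG sGGLK (field_subvMl F K) disjK).
- by rewrite /= prodv_distr_id defM.
Qed.
End Magnification.

Theorem theorem8p2 (F0 : fieldType) (hperf : perfect_field F0)
  (Om : splittingFieldType F0) (hOm : galois 1%VS {:Om})
  (K' L M : {subfield Om}) (d : nat) :
  galois 1%VS K' ->
  scm_nontrivial_factor 1%AS L M d ->
  lin_disjoint 1%AS (gal_closure 1%AS M) K' ->
  [/\ scm_nontrivial_factor K' (L * K')%AS (M * K')%AS d,
      scm 1%AS M (M * K')%AS,
      scm 1%AS L (L * K')%AS &
      ((1 < \dim K')%N ->
         scm_nontrivial 1%AS M (M * K')%AS /\ scm_nontrivial 1%AS L (L * K')%AS)].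
Proof.
move=> galK' [F [scmF neqF1 dimF]] disjMK'.
have sepOm : separable 1%AS {:Om} by case/and3P: hOm.
have [scmFK' dimFK'] := scm_with_base_change (sub1v K') sepOm scmF disjMK'.
have /and3P[_ sLM _] := scmF.
have scmK' (X : {subfield Om}) : (L <= X <= M)%VS -> scm_with 1%AS X (X * K')%AS K'.
  by move=> sLXM; apply: scm_with_galois_disjoint scmF sLXM galK' disjMK'.
have neqK'1 : (1 < \dim K')%N -> K' != 1%AS.
  by rewrite -(dimv_over_gt1 (sub1v K')) /= dimv1 divn1.
split.
- exists (F * K')%AS; split => //; last by rewrite dimFK'.
  by rewrite -dimv_over_gt1 ?field_subvMl // dimFK' dimv_over_gt1 ?sub1v.
- by exists K'; apply: scmK'; rewrite sLM subvv.
- by exists K'; apply: scmK'; rewrite sLM subvv.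
- by move=> /neqK'1 neqK'; split; exists K'; split; rewrite ?scmK' ?sLM ?subvv.
Qed.
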